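(* Let $H$ be a finite-dimensional real Hilbert space, $C\subseteq H$ nonempty, closed and convex, and $F:H\to H$ an operator such that (A1) $S_D\neq\emptyset$; (A2) $F$ is quasimonotone; (A3) $F$ is uniformly continuous on $H$; (A4) whenever $\{x_n\}\subset H$ and $x_n\rightharpoonup x$, one has $\|F(x)\|\le\liminf_{n\to\infty}\|F(x_n)\|$. Assume moreover that $F(z)\neq0$ for every $z\in S\setminus S_D$. Let $\{z_n\}$ be the sequence generated by Algorithm 3.1 (with $\epsilon=0$), and assume $z_n\neq w_n$ for all $n$. Then $\{z_n\}$ converges to a point $z^\ell\in S$.
   Context: $\rightharpoonup$ denotes weak convergence. $P_C$ denotes the metric projection onto $C$. $S$ is the solution set of the variational inequality: $x\in C$ with $\langle F(x),w-x\rangle\ge0$ for all $w\in C$. $S_D$ is the set of $z\in C$ with $\langle F(v),v-z\rangle\ge0$ for all $v\in C$. $F$ is quasimonotone if $\langle F(w),z-w\rangle>0$ implies $\langle F(z),z-w\rangle\ge0$ for all $w,z\in H$. Algorithm 3.1 (with $\epsilon=0$): fix $\mu\in(0,1)$, a sequence $\{\xi_n\}\subset[0,\infty)$ with $\sum_{n}\xi_n<\infty$, $z_1\in H$ and $\lambda_1>0$. For $n=1,2,\dots$: $w_n=P_C(z_n-\lambda_nF(z_n))$; $z_{n+1}=w_n+\lambda_n(F(z_n)-F(w_n))$; $\lambda_{n+1}=\min\{\frac{\mu\|z_n-w_n\|}{\|F(z_n)-F(w_n)\|},\lambda_n+\xi_n\}$ if $F(z_n)\neq F(w_n)$, and $\lambda_{n+1}=\lambda_n+\xi_n$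 otherwise. *)

(* The finite-dimensional real Hilbert space H is modelled as R^d = 'rV[R]_d
   with the Euclidean inner product (every finite-dimensional real Hilbert
   space is isometrically isomorphic to such a space). *)
From HB Require Import structures.
From mathcomp Require Import all_boot all_order all_algebra.
From mathcomp Require Import all_classical all_reals all_analysis.
Set Implicit Arguments. Unset Strict Implicit. Unset Printing Implicit Defensive.
Import Order.TTheory GRing.Theory Num.Theory numFieldNormedType.Exports.
Local Open Scope classical_set_scope.
Local Open Scope ring_scope.

Section Hilbert.
Variables (R : realType) (d : nat).
Notation H := 'rV[R]_d.

Definition dotp (u v : H) : R := (u *m v^T) 0 0.
Definition enorm (u : H) : R := Num.sqrt (dotp u u).

Definition convex_setH (C : set H) : Prop :=
  forall x y, C x -> C y -> forall t : R, 0 <= t <= 1 ->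
    C (t *: x + (1 - t) *: y).

Definition is_proj (C : set H) (x p : H) : Prop :=
  C p /\ forall w, C w -> enorm (x - p) <= enorm (x - w).

Definition VI_sol (C : set H) (F : H -> H) : set H :=
  [set x | C x /\ forall w, C w -> 0 <= dotp (F x) (w - x)].

Definition VI_dual_sol (C : set H) (F : H -> H) : set H :=
  [set z | C z /\ forall v, C v -> 0 <= dotp (F v) (v - z)].

Definition quasimonotone (F : H -> H) : Prop :=
  forall w z, 0 < dotp (F w) (z - w) -> 0 <= dotp (F z) (z - w).

Definition unif_continuousH (F : H -> H) : Prop :=
  forall eps : R, 0 < eps -> exists2 delta : R, 0 < delta &
    forall x y, enorm (x - y) < delta -> enorm (F x - F y) < eps.

Definition weak_cvg (x : nat -> H) (l : H) : Prop :=
  forall y : H, (fun n => dotp (x n) y) @ \oo --> dotp l y.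

Definition weak_lsc_norm (F : H -> H) : Prop :=
  forall (x : nat -> H) (l : H), weak_cvg x l ->
    ((enorm (F l))%:E <= limn_einf (fun n => (enorm (F (x n)))%:E))%E.

(* Algorithm 3.1 with epsilon = 0 (indices start at 0 instead of 1) *)
Definition alg31 (C : set H) (F : H -> H) (mu : R) (xi : nat -> R)
    (z w : nat -> H) (lam : nat -> R) : Prop :=
  forall n,
    is_proj C (z n - lam n *: F (z n)) (w n) /\
    z n.+1 = w n + lam n *: (F (z n) - F (w n)) /\
    lam n.+1 = (if F (z n) != F (w n)
                then Num.min (mu * enorm (z n - w n) / enorm (F (z n) - F (w n)))
                             (lam n + xi n)
                else lam n + xi n).

End Hilbert.

From HB Require Import structures.
From mathcomp Require Import all_boot all_order all_algebra.
From mathcomp Require Import all_classical all_reals all_analysis.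
From mathcomp Require Import ring lra.
Import Order.TTheory GRing.Theory Num.Theory numFieldNormedType.Exports.
Local Open Scope classical_set_scope.
Local Open Scope ring_scope.
Set Implicit Arguments. Unset Strict Implicit. Unset Printing Implicit Defensive.

(* Let t_n = |z_n - w_n| and g_n = |F z_n - F w_n|.  For p in S_D the projection
   inequality gives Tseng's estimate
     |z_{n+1} - p|^2 <= |z_n - p|^2 - t_n^2 + lam_n^2 g_n^2.
   Fix th strictly between mu and 1.  At steps where lam does not drop below
   th * lam_n, the step-size rule gives lam_n g_n <= (mu / th) t_n, so the distance
   to p decreases by a multiple of t_n^2.  The other steps have summable lam_n,
   because lam only grows by the summable xi_n; as uniform continuity makes F
   affinely bounded, |z_n - p|^2 grows there by at most c lam_n (1 + |z_n - p|^2),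
   so it stays bounded.  Either lam is bounded below, so eventually no drop occurs
   and t_n is small infinitely often, or lam comes arbitrarily close to 0, and at a
   step where it decreases the rule lam_{n+1} g_n = mu t_n makes t_n small compared
   with lam_n.  In both cases a subsequence has t_n -> 0 and t_n / lam_n -> 0.  By
   compactness it has a cluster point, which solves the VI by the projection
   inequality and lies in S_D by quasimonotonicity (F vanishes nowhere on S \ S_D);
   the quasi-Fejer estimate for this point then gives convergence of z_n. *)

Section InnerProduct.
Variables (R : realType) (d : nat).
Implicit Types u v x : 'rV[R]_d.

Lemma dotpE u v : dotp u v = \sum_i u 0 i * v 0 i.
Proof. by rewrite /dotp !mxE; apply: eq_bigr => i _; rewrite mxE. Qed.

Lemma dotpC u v : dotp u v = dotp v u.
Proof. by rewrite !dotpE; apply: eq_bigr => i _; rewrite mulrC. Qed.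

Lemma dotpDl u v x : dotp (u + v) x = dotp u x + dotp v x.
Proof. by rewrite !dotpE -big_split; apply: eq_bigr => i _; rewrite mxE mulrDl. Qed.

Lemma dotpDr u v x : dotp x (u + v) = dotp x u + dotp x v.
Proof. by rewrite !(dotpC x) dotpDl. Qed.

Lemma dotpZl (c : R) u v : dotp (c *: u) v = c * dotp u v.
Proof. by rewrite !dotpE mulr_sumr; apply: eq_bigr => i _; rewrite mxE mulrA. Qed.

Lemma dotpZr (c : R) u v : dotp v (c *: u) = c * dotp v u.
Proof. by rewrite !(dotpC v) dotpZl. Qed.

Lemma dotpNl u v : dotp (- u) v = - dotp u v.
Proof. by rewrite -scaleN1r dotpZl mulN1r. Qed.

Lemma dotpNr u v : dotp v (- u) = - dotp v u.
Proof. by rewrite !(dotpC v) dotpNl. Qed.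

Lemma dotpBl u v x : dotp (u - v) x = dotp u x - dotp v x.
Proof. by rewrite dotpDl dotpNl. Qed.

Lemma dotpBr u v x : dotp x (u - v) = dotp x u - dotp x v.
Proof. by rewrite dotpDr dotpNr. Qed.

Lemma dotp0r u : dotp u 0 = 0.
Proof. by rewrite dotpE big1 // => i _; rewrite mxE mulr0. Qed.

Lemma dotpp_ge0 u : 0 <= dotp u u.
Proof. by rewrite dotpE sumr_ge0 // => i _; rewrite -expr2 sqr_ge0. Qed.

Lemma sqr_coord_le_dotpp u i : u 0 i ^+ 2 <= dotp u u.
Proof.
rewrite dotpE (bigD1 i) //= -expr2 lerDl sumr_ge0 // => j _.
by rewrite -expr2 sqr_ge0.
Qed.

Lemma dotpp_eq0 u : (dotp u u == 0) = (u == 0).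
Proof.
apply/eqP/eqP => [u0|->]; last by rewrite dotp0r.
apply/rowP => i; rewrite mxE; apply/eqP.
by rewrite -sqrf_eq0 eq_le sqr_ge0 andbT -u0 sqr_coord_le_dotpp.
Qed.

Lemma enorm_ge0 u : 0 <= enorm u.
Proof. exact: sqrtr_ge0. Qed.

Lemma enorm_sqr u : enorm u ^+ 2 = dotp u u.
Proof. by rewrite /enorm sqr_sqrtr // dotpp_ge0. Qed.

Lemma enorm_gt0 u : u != 0 -> 0 < enorm u.
Proof. by move=> u0; rewrite sqrtr_gt0 lt_def dotpp_eq0 u0 dotpp_ge0. Qed.

Lemma dotp_sqr_le u v : dotp u v ^+ 2 <= dotp u u * dotp v v.
Proof.
have [->|v0] := eqVneq v 0; first by rewrite !dotp0r expr0n /= mulr0.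
have vv0 : 0 < dotp v v by rewrite lt_def dotpp_eq0 v0 dotpp_ge0.
have := dotpp_ge0 (dotp v v *: u - dotp u v *: v).
rewrite !(dotpBl, dotpBr, dotpZl, dotpZr) (dotpC v u) => h.
have : 0 <= dotp v v * (dotp u u * dotp v v - dotp u v ^+ 2) by nra.
by rewrite pmulr_rge0 // subr_ge0.
Qed.

Lemma normr_dotp_le u v : `|dotp u v| <= enorm u * enorm v.
Proof.
rewrite /enorm -sqrtrM ?dotpp_ge0 // -sqrtr_sqr.
by rewrite ler_sqrt ?mulr_ge0 ?dotpp_ge0 // dotp_sqr_le.
Qed.

Lemma dotp_le u v : dotp u v <= enorm u * enorm v.
Proof. exact: le_trans (ler_norm _) (normr_dotp_le u v). Qed.

Lemma enormD u v : enorm (u + v) <= enorm u + enorm v.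
Proof.
rewrite -ler_sqr ?nnegrE ?addr_ge0 ?enorm_ge0 //.
rewrite sqrrD !enorm_sqr dotpDl !dotpDr (dotpC v u).
by have := dotp_le u v; lra.
Qed.

Lemma enormZ (c : R) u : enorm (c *: u) = `|c| * enorm u.
Proof. by rewrite /enorm dotpZl dotpZr mulrA -expr2 sqrtrM ?sqr_ge0 // sqrtr_sqr. Qed.

Lemma enormN u : enorm (- u) = enorm u.
Proof. by rewrite -scaleN1r enormZ normrN1 mul1r. Qed.

Lemma enorm_distC u v : enorm (u - v) = enorm (v - u).
Proof. by rewrite -enormN opprB. Qed.

Lemma mx_norm_le_enorm u : `|u| <= enorm u.
Proof.
rewrite [leLHS]/Num.norm /= mx_normrE; apply/bigmax_leP; split => [|[i j] _ /=].
  exact: enorm_ge0.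
rewrite (ord1 i) /enorm -sqrtr_sqr ler_sqrt ?dotpp_ge0 //.
exact: sqr_coord_le_dotpp.
Qed.

Lemma enorm_le_mx_norm u : enorm u <= (d%:R + 1) * `|u|.
Proof.
have coord_le i : `|u 0 i| <= `|u|.
  rewrite [leRHS]/Num.norm /= mx_normrE; apply/bigmax_geP; right => /=.
  by exists (0, i).
rewrite -ler_sqr ?nnegrE ?mulr_ge0 ?enorm_ge0 //.
have : dotp u u <= d%:R * `|u| ^+ 2.
  rewrite dotpE -[d in d%:R]card_ord -sum1_card natr_sum mulr_suml.
  apply: ler_sum => i _; rewrite mul1r -expr2 -real_normK ?num_real //.
  by rewrite lerXn2r ?nnegrE ?normr_ge0 // coord_le.
rewrite enorm_sqr exprMn; have : (0 : R) <= d%:R by [].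
have := sqr_ge0 `|u|; nra.
Qed.

End InnerProduct.

Lemma le0_of_le_scaled (R : realFieldType) (a b : R) :
  0 <= b -> (forall s, 0 < s <= 1 -> a <= s * b) -> a <= 0.
Proof.
move=> b0 h; rewrite leNgt; apply/negP => a0.
set s := Num.min 1 (a / (b + 1)).
have s0 : 0 < s by rewrite lt_min ltr01 divr_gt0 // ltr_pwDr.
have := h s; rewrite s0 ge_min lexx => /(_ isT).
have : s * b <= a / (b + 1) * b by rewrite ler_wpM2r // ge_min lexx orbT.
have : a / (b + 1) * b < a by rewrite mulrAC ltr_pdivrMr ?ltr_pwDr //; nra.
lra.
Qed.

Section Projection.
Variables (R : realType) (d : nat) (C : set 'rV[R]_d).
Hypothesis Ccv : convex_setH C.

Lemma is_proj_dotp_le0 y p v : is_proj C y p -> C v -> dotp (y - p) (v - p) <= 0.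
Proof.
move=> [Cp hp] Cv.
apply: (@le0_of_le_scaled _ _ (dotp (v - p) (v - p) / 2)).
  by rewrite divr_ge0 ?dotpp_ge0.
move=> s /andP[s0 s1].
have Cu : C (s *: v + (1 - s) *: p) by apply: Ccv => //; rewrite (ltW s0) s1.
have : enorm (y - p) ^+ 2 <= enorm ((y - p) - s *: (v - p)) ^+ 2.
  rewrite ler_sqr ?nnegrE ?enorm_ge0 //.
  have -> : y - p - s *: (v - p) = y - (s *: v + (1 - s) *: p).
    by apply/rowP => i; rewrite !mxE; ring.
  exact: hp.
move: (y - p) (v - p) => e f.
rewrite !enorm_sqr dotpBl !dotpBr !dotpZl !dotpZr (dotpC f e) => h.
have : 0 <= s * (s * dotp f f - 2 * dotp e f) by nra.
rewrite pmulr_rge0 // subr_ge0; lra.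
Qed.

Lemma is_proj_enorm_le y p v : is_proj C y p -> C v -> enorm (p - v) <= enorm (y - v).
Proof.
move=> hp Cv; rewrite -ler_sqr ?nnegrE ?enorm_ge0 // !enorm_sqr.
have := is_proj_dotp_le0 hp Cv.
have -> : y - v = (y - p) + (p - v) by rewrite addrA subrK.
have -> : v - p = - (p - v) by rewrite opprB.
have := dotpp_ge0 (y - p).
move: (y - p) (p - v) => e f; rewrite dotpNr !(dotpDl, dotpDr) (dotpC f e); lra.
Qed.

End Projection.

Lemma tseng_ineq (R : realType) (d : nat) (z w p Fz Fw : 'rV[R]_d) (lam : R) :
  dotp (z - lam *: Fz - w) (p - w) <= 0 -> 0 <= lam -> 0 <= dotp Fw (w - p) ->
  enorm (w + lam *: (Fz - Fw) - p) ^+ 2 <=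
  enorm (z - p) ^+ 2 - enorm (z - w) ^+ 2 + lam ^+ 2 * enorm (Fz - Fw) ^+ 2.
Proof.
move=> h1 hl /(mulr_ge0 hl) h2; move: h1 h2; rewrite !enorm_sqr.
rewrite !(dotpDl, dotpDr, dotpNl, dotpNr, dotpZl, dotpZr, dotpBl, dotpBr).
rewrite ?(dotpC w z) ?(dotpC p z) ?(dotpC p w) ?(dotpC Fz z) ?(dotpC Fw z)
  ?(dotpC Fz w) ?(dotpC Fw w) ?(dotpC Fz p) ?(dotpC Fw p) ?(dotpC Fw Fz).
nra.
Qed.

Section UniformContinuity.
Variables (R : realType) (d : nat) (F : 'rV[R]_d -> 'rV[R]_d).

Lemma chain_bound (del : R) : 0 < del ->
  (forall x y, enorm (x - y) < del -> enorm (F x - F y) < 1) ->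
  forall (N : nat) x y, enorm (x - y) < N.+1%:R * del -> enorm (F x - F y) < N.+1%:R.
Proof.
move=> del0 hdel; elim => [|N IH] x y; first by rewrite mul1r => /hdel.
move=> hxy; set k : R := N.+2%:R.
have k0 : 0 < k by rewrite ltr0n.
set m := x + k^-1 *: (y - x).
have hxm : enorm (x - m) < del.
  rewrite /m opprD addrA subrr add0r enormN enormZ ger0_norm ?invr_ge0 ?ltW //.
  by rewrite enorm_distC mulrC ltr_pdivrMr // mulrC.
have hmy : enorm (m - y) < N.+1%:R * del.
  have -> : m - y = (1 - k^-1) *: (x - y) by apply/rowP => i; rewrite /m !mxE; ring.
  have -> : 1 - k^-1 = N.+1%:R / k by rewrite /k; field; rewrite gt_eqF.
  rewrite enormZ ger0_norm ?divr_ge0 ?ltW // mulrAC ltr_pdivrMr //.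
  by rewrite -mulrA ltr_pM2l ?ltr0n // mulrC.
have := enormD (F x - F m) (F m - F y); rewrite addrA subrK.
have := hdel _ _ hxm; have := IH _ _ hmy.
by rewrite /k -(natr1 N.+1); lra.
Qed.

Hypothesis uc : unif_continuousH F.

Lemma unif_cont_affine :
  exists2 K, 0 < K & forall x y, enorm (F x - F y) <= K * (1 + enorm (x - y)).
Proof.
have [del del0 hdel] := uc ltr01.
have idel0 : 0 <= del^-1 by rewrite invr_ge0 ltW.
exists (1 + del^-1) => [|x y]; first by rewrite ltr_wpDr.
set b := enorm (x - y); have b0 : 0 <= b := enorm_ge0 _.
set n := Num.truncn (b / del).
have hn : n%:R <= b / del by rewrite /n truncn_le (divr_ge0 b0 (ltW del0)).
have := truncnS_gt (b / del). rewrite -/n ltr_pdivrMr // => /(chain_bound del0 hdel).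
by rewrite -natr1; nra.
Qed.

Lemma unif_cont_affine_at p :
  exists2 K, 0 < K & forall x, enorm (F x) <= K * (1 + enorm (x - p)).
Proof.
have [K K0 hK] := unif_cont_affine.
exists (enorm (F p) + K) => [|x]; first by rewrite ltr_wpDl ?enorm_ge0.
have := enormD (F x - F p) (F p); rewrite subrK.
have := hK x p; have := enorm_ge0 (F p); have := enorm_ge0 (x - p); nra.
Qed.

Lemma dotpF_near x y (eta : R) : 0 < eta -> exists2 del : R, 0 < del &
  forall x' y', enorm (x' - x) < del -> enorm (y' - y) < del ->
    `|dotp (F x') y' - dotp (F x) y| < eta.
Proof.
move=> eta0; set ny := enorm y; set nf := enorm (F x).
have ny0 : 0 <= ny := enorm_ge0 _.
have nf0 : 0 <= nf := enorm_ge0 _.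
have eps0 : 0 < eta / (2 * (ny + 1)) by rewrite divr_gt0 // mulr_gt0 // ltr_pwDr.
have [d0 d00 hd0] := uc eps0.
exists (Num.min d0 (Num.min 1 (eta / (2 * (nf + 1))))).
  by rewrite !lt_min d00 ltr01 divr_gt0 // mulr_gt0 // ltr_pwDr.
move=> x' y'; rewrite !lt_min => /and3P[hx _ _] /and3P[_ hy1 hy2].
have -> : dotp (F x') y' - dotp (F x) y = dotp (F x' - F x) y' + dotp (F x) (y' - y).
  by rewrite dotpBl dotpBr addrA subrK.
apply: le_lt_trans (ler_normD _ _) _.
have c1 := normr_dotp_le (F x' - F x) y'.
have c2 := normr_dotp_le (F x) (y' - y).
have ey : enorm y' <= ny + 1.
  by have := enormD (y' - y) y; rewrite subrK -/ny; lra.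
have t1 : enorm (F x' - F x) * enorm y' <= eta / (2 * (ny + 1)) * (ny + 1).
  by apply: ler_pM; rewrite ?enorm_ge0 // ltW // hd0.
have t2 : nf * enorm (y' - y) <= nf * (eta / (2 * (nf + 1))).
  by apply: ler_wpM2l => //; apply: ltW.
have e1 : eta / (2 * (ny + 1)) * (ny + 1) = eta / 2.
  by field; rewrite gt_eqF // ltr_pwDr.
have e2 : nf * (eta / (2 * (nf + 1))) < eta / 2.
  by rewrite mulrA ltr_pdivrMr ?mulr_gt0 ?ltr_pwDr //; nra.
rewrite -/nf in c2; lra.
Qed.

Lemma dotp_ge0_of_approx p v :
  (forall e, 0 < e -> exists x y,
     [/\ enorm (x - p) < e, enorm (y - p) < e & - e <= dotp (F x) (v - y)]) ->
  0 <= dotp (F p) (v - p).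
Proof.
move=> happrox; rewrite leNgt; apply/negP => hneg.
set eta := - dotp (F p) (v - p).
have eta0 : 0 < eta by rewrite oppr_gt0.
have [del del0 hdel] := dotpF_near p (v - p) (divr_gt0 eta0 (ltr0Sn _ 1)).
have [|x [y [hx hy hxy]]] := happrox (Num.min del (eta / 2)).
  by rewrite lt_min del0 divr_gt0.
have hmin : Num.min del (eta / 2) <= eta / 2 by rewrite ge_min lexx orbT.
move: hx hy; rewrite !lt_min => /andP[hx _] /andP[hy _].
have hy' : enorm ((v - y) - (v - p)) < del.
  by rewrite opprB addrC addrA subrK enorm_distC.
have := hdel _ _ hx hy'; rewrite ltr_norml => /andP[_].
by rewrite /eta in hmin *; lra.
Qed.

Lemma quasimonotone_dual_sol (C : set 'rV[R]_d) p :
  quasimonotone F -> VI_sol C F p -> F p != 0 -> VI_dual_sol C F p.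
Proof.
move=> qm [Cp hp] Fp0; split => // v Cv.
rewrite leNgt; apply/negP => hneg.
set eta := - dotp (F v) (v - p).
have eta0 : 0 < eta by rewrite oppr_gt0.
have [del del0 hdel] := dotpF_near v (v - p) eta0.
have Fp_gt0 : 0 < enorm (F p) := enorm_gt0 Fp0.
have h2 : 0 < 2 * (enorm (F p) + 1) by lra.
set s := del / (2 * (enorm (F p) + 1)).
have s0 : 0 < s by rewrite divr_gt0.
have hv : enorm (v + s *: F p - v) < del.
  rewrite addrC addKr enormZ ger0_norm ?ltW // /s.
  by rewrite mulrAC ltr_pdivrMr //; nra.
have hvp : enorm ((v + s *: F p - p) - (v - p)) < del.
  by rewrite opprB addrA subrK.
(* For v' = v + s F p, p in S gives <F p, v' - p> > 0, so quasimonotonicity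
   yields <F v', v' - p> >= 0, while <F v, v - p> < 0 and v' is close to v. *)
have pos : 0 < dotp (F p) (v + s *: F p - p).
  rewrite addrAC dotpDr dotpZr -enorm_sqr.
  by have := hp _ Cv; have := mulr_gt0 s0 (exprn_gt0 2 Fp_gt0); lra.
have := qm _ _ pos; have := hdel _ _ hv hvp; rewrite ltr_norml => /andP[_].
by rewrite /eta; lra.
Qed.

End UniformContinuity.

Section Compactness.
Variables (R : realType) (d : nat).

Lemma closed_enorm_approx (C : set 'rV[R]_d) x : closed C ->
  (forall e : R, 0 < e -> exists2 c, C c & enorm (c - x) < e) -> C x.
Proof.
move=> /closure_id Cclosure h; rewrite Cclosure => B /nbhs_ballP [e /= e0 he].
have [c Cc hc] := h e e0; exists c; split => //; apply: he.
rewrite mx_norm_ball /ball_ /=; apply: le_lt_trans (mx_norm_le_enorm _) _.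
by rewrite enorm_distC.
Qed.

Lemma bounded_cluster_point (u : nat -> 'rV[R]_d) p (B : R) :
  (forall k, enorm (u k - p) <= B) ->
  exists zb, forall e : R, 0 < e -> forall N, exists2 k, (N <= k)%N & enorm (u k - zb) < e.
Proof.
move=> hB.
set K := closed_ball_ (fun x : 'rV[R]_d => `|x|) p B.
have Kc : closed K by apply: closed_closed_ball_.
have Kb : bounded_set K.
  apply: filterS (nbhs_pinfty_ge (num_real (`|p| + B))) => M hM x.
  rewrite /K /closed_ball_ /= => hx.
  have h : `|x| <= `|p| + `|p - x|.
    by have := ler_normD p (x - p); rewrite (addrC p (x - p)) subrK distrC.
  by apply: le_trans h _; apply: le_trans (lerD (lexx _) hx) _.
have uK k : K (u k).
  by rewrite /K /closed_ball_ /= distrC; apply: le_trans (mx_norm_le_enorm _) _.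
have uKF : (u @ \oo) K by exists 0%N => // n _; exact: uK.
have [zb [_ clz]] := bounded_closed_compact Kb Kc _ uKF.
exists zb => e e0 N.
have e'0 : 0 < e / (d%:R + 1) by rewrite divr_gt0 // ltr_wpDl.
have hA : (u @ \oo) (u @` [set k | (N <= k)%N]) by exists N => // n /= hn; exists n.
have [_ [[k /= hk <-] hb]] := clz _ _ hA (nbhsx_ballx zb _ e'0).
exists k => //; apply: le_lt_trans (enorm_le_mx_norm _) _.
move: hb; rewrite mx_norm_ball /ball_ /= distrC -ltr_pdivlMl ?ltr_wpDl //.
by rewrite mulrC.
Qed.

End Compactness.

Section RealSequences.
Variable R : realType.
Implicit Types u a b s : nat -> R.

Lemma descent_index u N m : (N <= m)%N -> u m < u N ->
  exists n, [/\ (N <= n)%N, (n < m)%N, u n.+1 < u n & u n.+1 <= u m].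
Proof.
elim: m => [|m IH]; first by rewrite leqn0 => /eqP ->; rewrite ltxx.
rewrite leq_eqVlt => /orP[/eqP ->|hN]; first by rewrite ltxx.
move=> hlt; case: (ltP (u m.+1) (u m)) => h; first by exists m.
have [n [h1 h2 h3 h4]] := IH hN (le_lt_trans h hlt).
by exists n; split => //; [exact: ltnW | exact: le_trans h4 h].
Qed.

Lemma series_le_lim b : (forall n, 0 <= b n) -> cvgn (series b) ->
  forall n, series b n <= limn (series b).
Proof.
move=> b0; apply: nondecreasing_cvgn_le.
exact: (@nondecreasing_series _ b predT 0%N (fun k _ _ => b0 k)).
Qed.

Lemma cvgn_series_bounded b (B : R) : (forall n, 0 <= b n) ->
  (forall n, series b n <= B) -> cvgn (series b).
Proof.
move=> b0 hB; apply: nondecreasing_is_cvgn.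
  exact: (@nondecreasing_series _ b predT 0%N (fun k _ _ => b0 k)).
by exists B => _ [n _ <-].
Qed.

Lemma le_expR_series a b : 0 <= a 0%N -> (forall n, 0 <= b n) ->
  (forall n, a n.+1 <= a n * (1 + b n)) -> forall n, a n <= a 0%N * expR (series b n).
Proof.
move=> a00 b0 ha; elim => [|n IH].
  by rewrite /series /= big_geq // expR0 mulr1.
apply: le_trans (ha n) _; rewrite seriesSr expRD mulrA.
apply: le_trans (_ : _ <= a 0%N * expR (series b n) * (1 + b n)) _.
  by rewrite ler_wpM2r ?addr_ge0.
by rewrite ler_wpM2l ?mulr_ge0 ?expR_ge0 ?expR_ge1Dx.
Qed.

Lemma frequently_lt_of_decr a s N : (forall n, 0 <= a n) ->
  (forall n, (N <= n)%N -> a n.+1 <= a n - s n) ->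
  forall e, 0 < e -> forall N0, exists2 n, (N0 <= n)%N & s n < e.
Proof.
move=> a0 ha e e0 N0; apply: contrapT => hnot.
have hs n : (N0 <= n)%N -> e <= s n.
  by move=> hn; rewrite leNgt; apply/negP => hsn; apply: hnot; exists n.
set M := maxn N0 N.
have decr k : a (M + k)%N <= a M - k%:R * e.
  elim: k => [|k IH]; first by rewrite addn0 mul0r subr0.
  have hMk : (M <= M + k)%N := leq_addr k M.
  have := ha _ (leq_trans (leq_maxr N0 N) hMk).
  have := hs _ (leq_trans (leq_maxl N0 N) hMk).
  by rewrite addnS -natr1 mulrDl mul1r; lra.
set k := (Num.truncn (a M / e)).+1.
have := truncnS_gt (a M / e); rewrite ltr_pdivrMr // -/k.
by have := decr k; have := a0 (M + k)%N; lra.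
Qed.

Lemma quasi_fejer_eventually_lt a b : (forall n, 0 <= b n) -> cvgn (series b) ->
  (forall n, a n.+1 <= a n + b n) ->
  (forall e, 0 < e -> forall N, exists2 n, (N <= n)%N & a n < e) ->
  forall e, 0 < e -> \forall n \near \oo, a n < e.
Proof.
move=> b0 bcvg ha hsmall e e0.
have tail m n : (m <= n)%N -> a n <= a m + (series b n - series b m).
  move=> /subnK <-; elim: (n - m)%N => [|j IH]; first by rewrite add0n subrr addr0.
  by rewrite addSn seriesSr; have := ha (j + m)%N; lra.
have e20 : 0 < e / 2 by rewrite divr_gt0.
have [M _ hM] := (cvgrPdist_lt _ _).1 bcvg _ e20.
have [m hMm ham] := hsmall _ e20 M.
exists m => // n /= hmn.
have := hM _ hMm; rewrite /= ger0_norm ?subr_ge0 ?series_le_lim //.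
by have := tail _ _ hmn; have := series_le_lim b0 bcvg n; lra.
Qed.

End RealSequences.

Section Algorithm.
Variables (R : realType) (d : nat) (C : set 'rV[R]_d) (F : 'rV[R]_d -> 'rV[R]_d).
Variables (mu : R) (xi : nat -> R) (z w : nat -> 'rV[R]_d) (lam : nat -> R).
Hypotheses (Ccl : closed C) (Ccv : convex_setH C) (SDne : VI_dual_sol C F !=set0).
Hypotheses (qm : quasimonotone F) (uc : unif_continuousH F).
Hypothesis hS : forall x, VI_sol C F x -> ~ VI_dual_sol C F x -> F x != 0.
Hypotheses (hmu : 0 < mu < 1) (xi0 : forall n, 0 <= xi n) (xicv : cvgn (series xi)).
Hypotheses (lam0 : 0 < lam 0%N) (alg : alg31 C F mu xi z w lam).
Hypothesis zw : forall n, z n != w n.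

Let t n := enorm (z n - w n).
Let g n := enorm (F (z n) - F (w n)).
Let q p n := enorm (z n - p) ^+ 2.

Let mu_gt0 : 0 < mu. Proof. by case/andP: hmu. Qed.
Let mu_lt1 : mu < 1. Proof. by case/andP: hmu. Qed.

Lemma alg_proj n : is_proj C (z n - lam n *: F (z n)) (w n).
Proof. by case: (alg n). Qed.

Lemma alg_next n : z n.+1 = w n + lam n *: (F (z n) - F (w n)).
Proof. by case: (alg n) => _ []. Qed.

Lemma alg_lam n : lam n.+1 =
  if F (z n) != F (w n) then Num.min (mu * t n / g n) (lam n + xi n) else lam n + xi n.
Proof. by case: (alg n) => _ []. Qed.

Lemma alg_w_in_C n : C (w n).
Proof. by case: (alg_proj n). Qed.

Lemma alg_t_gt0 n : 0 < t n.
Proof. by apply: enorm_gt0; rewrite subr_eq0 zw. Qed.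

Lemma alg_g_gt0 n : F (z n) != F (w n) -> 0 < g n.
Proof. by move=> hF; apply: enorm_gt0; rewrite subr_eq0. Qed.

Lemma lam_gt0 n : 0 < lam n.
Proof.
elim: n => // n IH; rewrite alg_lam; case: ifP => [hF|_]; last by rewrite ltr_wpDr.
by rewrite lt_min ltr_wpDr // andbT divr_gt0 ?mulr_gt0 ?alg_t_gt0 ?alg_g_gt0.
Qed.

Lemma lam_g_le n : lam n.+1 * g n <= mu * t n.
Proof.
rewrite alg_lam; case: ifP => [hF|/negbFE/eqP hF].
  by rewrite -ler_pdivlMr ?alg_g_gt0 // ge_min lexx.
by rewrite /g hF subrr /enorm dotp0r sqrtr0 mulr0 mulr_ge0 ?enorm_ge0 ?ltW.
Qed.

Lemma lam_le_next n : lam n.+1 <= lam n + xi n.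
Proof. by rewrite alg_lam; case: ifP => _ //; rewrite ge_min lexx orbT. Qed.

Lemma lam_g_eq_of_lt n : lam n.+1 < lam n -> lam n.+1 * g n = mu * t n.
Proof.
rewrite alg_lam; case: ifP => [hF|_]; last by have := xi0 n; lra.
have [hle|hlt] := leP (mu * t n / g n) (lam n + xi n).
  by rewrite divfK ?gt_eqF ?alg_g_gt0.
by have := xi0 n; lra.
Qed.

Let Lam := lam 0%N + limn (series xi).

Lemma lam_le_Lam n : lam n <= Lam.
Proof.
have : lam n <= lam 0%N + series xi n.
  elim: n => [|n IH]; first by rewrite /series /= big_geq // addr0.
  by rewrite seriesSr; have := lam_le_next n; lra.
by have := series_le_lim xi0 xicv n; rewrite /Lam; lra.
Qed.

Lemma Lam_ge0 : 0 <= Lam.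
Proof. exact: le_trans (ltW (lam_gt0 0)) (lam_le_Lam 0). Qed.

Let th := (1 + mu) / 2.
Let ka := mu / th.
Let sharp_drop n := lam n.+1 < th * lam n.
Let drop_lam n := if sharp_drop n then lam n else 0.

Let th_gt0 : 0 < th. Proof. by rewrite /th; have := mu_gt0; lra. Qed.
Let th_lt1 : th < 1. Proof. by rewrite /th; have := mu_lt1; lra. Qed.
Let ka_ge0 : 0 <= ka. Proof. exact: divr_ge0 (ltW mu_gt0) (ltW th_gt0). Qed.

Let ka_sqr_lt1 : ka ^+ 2 < 1.
Proof.
by rewrite expr_lt1 // /ka ltr_pdivrMr // mul1r /th; have := mu_lt1; lra.
Qed.

Lemma drop_lam_ge0 n : 0 <= drop_lam n.
Proof. by rewrite /drop_lam; case: ifP => // _; exact: ltW (lam_gt0 n). Qed.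

(* Each sharp drop costs at least (1 - th) lam n, and lam gains at most the
   summable xi n per step. *)
Lemma series_drop_lam_le n : series drop_lam n <= Lam / (1 - th).
Proof.
have : lam n + (1 - th) * series drop_lam n <= lam 0%N + series xi n.
  elim: n => [|n IH]; first by rewrite /series /= !big_geq // mulr0 addr0.
  rewrite !seriesSr /drop_lam; have := lam_le_next n; have := xi0 n.
  by case: ifP; rewrite /sharp_drop => h; lra.
rewrite ler_pdivlMr ?subr_gt0 // mulrC.
by have := series_le_lim xi0 xicv n; have := lam_gt0 n; rewrite /Lam; lra.
Qed.

Lemma cvg_series_drop_lam : cvgn (series drop_lam).
Proof. exact: cvgn_series_bounded drop_lam_ge0 series_drop_lam_le. Qed.

Lemma lam_g_le_of_no_drop n : ~~ sharp_drop n -> lam n * g n <= ka * t n.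
Proof.
rewrite /sharp_drop -leNgt => h.
rewrite /ka mulrAC ler_pdivlMr // mulrAC.
by apply: le_trans (lam_g_le n); rewrite ler_wpM2r ?enorm_ge0 // mulrC.
Qed.

Lemma fejer_step p n : VI_dual_sol C F p ->
  q p n.+1 <= q p n - t n ^+ 2 + lam n ^+ 2 * g n ^+ 2.
Proof.
move=> [Cp hp]; rewrite /q alg_next; apply: tseng_ineq.
- by have := is_proj_dotp_le0 Ccv (alg_proj n) Cp.
- exact: ltW (lam_gt0 n).
- exact: hp (alg_w_in_C n).
Qed.

Lemma dist_step_no_drop p n : VI_dual_sol C F p -> ~~ sharp_drop n ->
  q p n.+1 <= q p n - (1 - ka ^+ 2) * t n ^+ 2.
Proof.
move=> hp /lam_g_le_of_no_drop h; have := fejer_step n hp.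
have lg0 : 0 <= lam n * g n by rewrite mulr_ge0 ?enorm_ge0 // ltW ?lam_gt0.
have : (lam n * g n) ^+ 2 <= (ka * t n) ^+ 2 by rewrite ler_sqr ?nnegrE // (le_trans lg0 h).
by rewrite !exprMn; lra.
Qed.

Lemma alg_g_affine p : C p -> exists2 K, 0 <= K & forall n, g n <= K * (1 + enorm (z n - p)).
Proof.
move=> Cp; have [K1 K10 hK1] := unif_cont_affine_at uc p.
have [K K0 hK] := unif_cont_affine uc.
have LK0 : 0 <= Lam * K1 by rewrite mulr_ge0 ?Lam_ge0 ?ltW.
exists (K * (2 + Lam * K1)) => [|n]; first by rewrite mulr_ge0 ?ltW //; lra.
set b := enorm (z n - p); have b0 : 0 <= b := enorm_ge0 _.
have hw : enorm (w n - p) <= b + Lam * (K1 * (1 + b)).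
  apply: le_trans (is_proj_enorm_le Ccv (alg_proj n) Cp) _.
  rewrite addrAC; apply: le_trans (enormD _ _) _.
  rewrite enormN enormZ gtr0_norm ?lam_gt0 // lerD2l.
  by apply: ler_pM; rewrite ?enorm_ge0 ?(ltW (lam_gt0 n)) ?lam_le_Lam ?hK1.
have ht : t n <= b + enorm (w n - p).
  rewrite /t -(subrKA p) addrC; apply: le_trans (enormD _ _) _.
  by rewrite enorm_distC addrC.
apply: le_trans (hK _ _) _; rewrite -mulrA ler_wpM2l ?ltW //.
by rewrite -/(t n); nra.
Qed.

Lemma dist_step_le p : VI_dual_sol C F p ->
  exists2 c, 0 <= c & forall n, q p n.+1 <= q p n + c * lam n * (1 + q p n).
Proof.
move=> hp; have [Cp _] := hp; have [K K0 hK] := alg_g_affine Cp.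
exists (2 * Lam * K ^+ 2) => [|n]; first by rewrite !mulr_ge0 ?Lam_ge0 ?sqr_ge0.
have := fejer_step n hp; rewrite /q.
set b := enorm (z n - p); have b0 : 0 <= b := enorm_ge0 _.
have hg : g n ^+ 2 <= 2 * K ^+ 2 * (1 + b ^+ 2).
  have : g n ^+ 2 <= (K * (1 + b)) ^+ 2.
    by rewrite ler_sqr ?nnegrE ?mulr_ge0 ?enorm_ge0 ?addr_ge0 ?hK.
  by rewrite exprMn; have := sqr_ge0 (1 - b); have := sqr_ge0 K; nra.
have hl : lam n ^+ 2 <= lam n * Lam.
  by rewrite expr2 ler_wpM2l ?lam_le_Lam // ltW ?lam_gt0.
have := ler_pM (sqr_ge0 _) (sqr_ge0 _) hl hg.
by have := sqr_ge0 (t n); lra.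
Qed.

Lemma dist_step_quasi_fejer p : VI_dual_sol C F p ->
  exists2 c, 0 <= c & forall n, q p n.+1 <= q p n + c * drop_lam n * (1 + q p n).
Proof.
move=> hp; have [c c0 hc] := dist_step_le hp; exists c => // n.
rewrite /drop_lam; case: ifP => [_|/negbT hn]; first exact: hc.
have := dist_step_no_drop hp hn; have := sqr_ge0 (t n); have := ka_sqr_lt1.
by rewrite mulr0 mul0r addr0; nra.
Qed.

Lemma dist_bounded p : VI_dual_sol C F p -> exists Q, forall n, q p n <= Q.
Proof.
move=> hp; have [c c0 hc] := dist_step_quasi_fejer hp.
exists ((1 + q p 0%N) * expR (c * (Lam / (1 - th)))) => n.
have q0 : 0 <= 1 + q p 0%N by rewrite addr_ge0 ?sqr_ge0.
have : 1 + q p n <= (1 + q p 0%N) * expR (series (fun k => c * drop_lam k) n).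
  apply: (@le_expR_series _ (fun n => 1 + q p n)) => // k.
    exact: mulr_ge0 c0 (drop_lam_ge0 k).
  by have := hc k; lra.
rewrite /series /= -mulr_sumr -/(series drop_lam n) => h.
have : expR (c * series drop_lam n) <= expR (c * (Lam / (1 - th))).
  by rewrite ler_expR ler_wpM2l ?series_drop_lam_le.
by move=> /(ler_wpM2l q0); lra.
Qed.

Lemma alg_g_bounded : exists2 G, 0 < G & forall n, g n <= G.
Proof.
have [p0 hp0] := SDne; have [Cp0 _] := hp0.
have [K K0 hK] := alg_g_affine Cp0.
have [Q hQ] := dist_bounded hp0.
exists (K * (2 + Q) + 1) => [|n].
  by have := hQ 0%N; have := sqr_ge0 (enorm (z 0%N - p0)); rewrite /q; nra.
apply: le_trans (hK n) _.
have := hQ n; have := enorm_ge0 (z n - p0); rewrite /q; nra.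
Qed.

Lemma small_residual_of_lam_lb c N1 : 0 < c -> (forall n, (N1 <= n)%N -> c <= lam n) ->
  forall e, 0 < e -> forall N, exists2 n, (N <= n)%N & t n < e * lam n /\ t n < e.
Proof.
move=> c0 hc e e0 N; have [p0 hp0] := SDne.
have [N2 hN2] : exists N2, forall n, (N2 <= n)%N -> ~~ sharp_drop n.
  have [M _ hM] := (cvgrPdist_lt _ _).1 (cvg_series_cvg_0 cvg_series_drop_lam) _ c0.
  exists (maxn M N1) => n hn; apply/negP => hdrop.
  have := hM n (leq_trans (leq_maxl M N1) hn).
  have := hc n (leq_trans (leq_maxr M N1) hn).
  by rewrite /= sub0r normrN /drop_lam hdrop (ger0_norm (ltW (lam_gt0 n))); lra.
set r := Num.min (e * c) e.
have r0 : 0 < r by rewrite lt_min e0 mulr_gt0.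
have [hrc hre] : r <= e * c /\ r <= e by split; rewrite ge_min lexx ?orbT.
have ka0 : 0 < 1 - ka ^+ 2 by rewrite subr_gt0.
have [n hn] := frequently_lt_of_decr (a := q p0) (s := fun n => (1 - ka ^+ 2) * t n ^+ 2)
  (fun n => sqr_ge0 _) (fun n hn => dist_step_no_drop hp0 (hN2 n hn))
  (mulr_gt0 ka0 (exprn_gt0 2 r0)) (maxn N N1).
rewrite /= ltr_pM2l // ltr_sqr ?nnegrE ?enorm_ge0 ?ltW // => htr.
exists n; first exact: leq_trans (leq_maxl N N1) hn.
have := ler_wpM2l (ltW e0) (hc n (leq_trans (leq_maxr N N1) hn)).
by lra.
Qed.

Lemma small_residual_of_lam_not_lb :
  (forall c, 0 < c -> forall N, exists2 n, (N <= n)%N & lam n < c) ->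
  forall e, 0 < e -> forall N, exists2 n, (N <= n)%N & t n < e * lam n /\ t n < e.
Proof.
move=> hsmall e e0 N.
have [G G0 hG] := alg_g_bounded.
have [del del0 hdel] := uc (mulr_gt0 mu_gt0 e0).
set r := Num.min del e.
have r0 : 0 < r by rewrite lt_min del0 e0.
have [hrd hre] : r <= del /\ r <= e by split; rewrite ge_min lexx ?orbT.
set c := Num.min (mu * r / G) (lam N).
have c0 : 0 < c by rewrite lt_min divr_gt0 ?mulr_gt0 ?lam_gt0.
have [hcG hcN] : c <= mu * r / G /\ c <= lam N by split; rewrite ge_min lexx ?orbT.
have [m hNm hm] := hsmall c c0 N.
have [n [hNn _ hdec hlm]] := descent_index hNm (lt_le_trans hm hcN).
have hstep := lam_g_eq_of_lt hdec.
have htr : t n < r.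
  rewrite -(ltr_pM2l mu_gt0) -hstep.
  apply: le_lt_trans (ler_wpM2l (ltW (lam_gt0 _)) (hG n)) _.
  by rewrite -ltr_pdivlMr // (lt_le_trans (le_lt_trans hlm hm) hcG).
have hg : g n < mu * e by apply: hdel; exact: lt_le_trans htr hrd.
exists n => //; split; last exact: lt_le_trans htr hre.
rewrite -(ltr_pM2l mu_gt0) -hstep.
have := lam_gt0 n; have := lam_gt0 n.+1; have := enorm_ge0 (F (z n) - F (w n)).
by rewrite -/(g n); nra.
Qed.

Lemma small_residual e : 0 < e ->
  forall N, exists2 n, (N <= n)%N & t n < e * lam n /\ t n < e.
Proof.
have [[c [c0 [N1 hN1]]]|hnot] :=
  pselect (exists c, 0 < c /\ exists N1, forall n, (N1 <= n)%N -> c <= lam n).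
  exact: small_residual_of_lam_lb c0 hN1 e.
apply: small_residual_of_lam_not_lb => c c0 N; apply: contrapT => hN; apply: hnot.
exists c; split => //; exists N => n hn.
by rewrite leNgt; apply/negP => hlt; apply: hN; exists n.
Qed.

Let cluster_small_residual zb := forall e, 0 < e -> forall N,
  exists2 n, (N <= n)%N & [/\ enorm (z n - zb) < e, t n < e & t n < e * lam n].

Lemma exists_cluster_small_residual : exists zb, cluster_small_residual zb.
Proof.
have ik0 k : 0 < k.+1%:R^-1 :> R by rewrite invr_gt0 ltr0Sn.
have /choice [nk hnk] : forall k, exists n,
    (k <= n)%N /\ t n < k.+1%:R^-1 * lam n /\ t n < k.+1%:R^-1.
  by move=> k; have [n hn hres] := small_residual (ik0 k) k; exists n.
have [p0 hp0] := SDne; have [Q hQ] := dist_bounded hp0.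
have [|zb hzb] := @bounded_cluster_point _ _ (z \o nk) p0 (1 + Q).
  move=> k /=; have := hQ (nk k); have := enorm_ge0 (z (nk k) - p0).
  by rewrite /q; nra.
exists zb => e e0 N.
have [K _ hK] := near_infty_natSinv_lt (PosNum e0).
have [k hk hzk] := hzb e e0 (maxn N K).
have [hkn [hle hlt]] := hnk k.
have hke : k.+1%:R^-1 <= e := ltW (hK k (leq_trans (leq_maxr N K) hk)).
exists (nk k); first exact: leq_trans (leq_trans (leq_maxl N K) hk) hkn.
split => //; first exact: lt_le_trans hlt hke.
exact: lt_le_trans hle (ler_wpM2r (ltW (lam_gt0 _)) hke).
Qed.

Lemma alg_dotp_lower v n : C v ->
  - (t n * enorm (v - w n)) <= lam n * dotp (F (z n)) (v - w n).
Proof.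
move=> Cv; have := is_proj_dotp_le0 Ccv (alg_proj n) Cv.
rewrite addrAC dotpBl dotpZl.
have := dotp_le (- (z n - w n)) (v - w n); rewrite dotpNl enormN -/(t n).
by lra.
Qed.

Section ClusterPoint.
Variable zb : 'rV[R]_d.
Hypothesis hzb : cluster_small_residual zb.

Lemma cluster_in_C : C zb.
Proof.
apply: closed_enorm_approx Ccl _ => e e0.
have [n _ [hz ht _]] := hzb (divr_gt0 e0 (ltr0Sn _ 1)) 0%N.
exists (w n); first exact: alg_w_in_C.
have := enormD (w n - z n) (z n - zb).
by rewrite addrA subrK (enorm_distC (w n) (z n)) -/(t n); lra.
Qed.

Lemma cluster_sol : VI_sol C F zb.
Proof.
split; first exact: cluster_in_C.
move=> v Cv; apply: (dotp_ge0_of_approx uc) => e e0.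
set E := enorm (v - zb) + 2.
have E2 : 2 <= E by rewrite lerDr enorm_ge0.
set e' := Num.min 1 (e / (2 * E)).
have E0 : 0 < 2 * E by lra.
have e'0 : 0 < e' by rewrite lt_min ltr01 divr_gt0.
have he'1 : e' <= 1 by rewrite ge_min lexx.
have he'E : e' * (2 * E) <= e by rewrite -ler_pdivlMr // ge_min lexx orbT.
have he'e : 2 * e' <= e by nra.
have [n _ [hz ht htl]] := hzb e'0 0%N.
have hw : enorm (w n - zb) < 2 * e'.
  have := enormD (w n - z n) (z n - zb).
  by rewrite addrA subrK (enorm_distC (w n) (z n)) -/(t n); lra.
have hvw : enorm (v - w n) <= E.
  have := enormD (v - zb) (zb - w n); rewrite addrA subrK (enorm_distC zb).
  by rewrite /E; lra.
have hprod : t n * enorm (v - w n) <= e' * lam n * E.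
  by apply: ler_pM; [exact: enorm_ge0 | exact: enorm_ge0 | exact: ltW | ].
have hlamE : e' * lam n * E <= lam n * e.
  by rewrite mulrAC mulrC ler_wpM2l ?ltW ?lam_gt0 //; nra.
exists (z n), (w n); split; [lra | lra |].
rewrite -(ler_pM2l (lam_gt0 n)); have := alg_dotp_lower n Cv.
by lra.
Qed.

Lemma cluster_dual_sol : VI_dual_sol C F zb.
Proof.
have [//|hnot] := pselect (VI_dual_sol C F zb).
by have := quasimonotone_dual_sol uc qm cluster_sol (hS cluster_sol hnot).
Qed.

Lemma cvg_to_cluster : (fun n => enorm (z n - zb)) @ \oo --> (0 : R).
Proof.
have [c c0 hc] := dist_step_quasi_fejer cluster_dual_sol.
have [Q hQ] := dist_bounded cluster_dual_sol.
have hnear : forall e, 0 < e -> \forall n \near \oo, q zb n < e.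
  apply: (@quasi_fejer_eventually_lt _ _ (fun n => c * (1 + Q) * drop_lam n)).
  - by move=> n; rewrite !mulr_ge0 ?drop_lam_ge0 // addr_ge0 // (le_trans (sqr_ge0 _) (hQ 0%N)).
  - exact: is_cvg_seriesZ cvg_series_drop_lam.
  - move=> n; have := hc n.
    have : c * drop_lam n * (1 + q zb n) <= c * (1 + Q) * drop_lam n.
      by rewrite mulrAC ler_wpM2r ?drop_lam_ge0 // ler_wpM2l // lerD2l hQ.
    by lra.
  - move=> e e0 N; set r := Num.min 1 e.
    have r0 : 0 < r by rewrite lt_min ltr01.
    have [hr1 hre] : r <= 1 /\ r <= e by split; rewrite ge_min lexx ?orbT.
    have [n hn [hz _ _]] := hzb r0 N.
    exists n => //; rewrite /q.
    by have := enorm_ge0 (z n - zb); nra.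
apply/cvgrPdist_lt => e e0; apply: filterS (hnear _ (exprn_gt0 2 e0)) => n /=.
by rewrite sub0r normrN ger0_norm ?enorm_ge0 // /q ltr_sqr ?nnegrE ?enorm_ge0 ?ltW.
Qed.

End ClusterPoint.

Lemma alg31_cvg : exists2 zl, VI_sol C F zl & (fun n => enorm (z n - zl)) @ \oo --> (0 : R).
Proof.
have [zb hzb] := exists_cluster_small_residual.
by exists zb; [exact: cluster_sol | exact: cvg_to_cluster].
Qed.

End Algorithm.

Theorem theorem4p1 (R : realType) (d : nat) (C : set 'rV[R]_d)
  (F : 'rV[R]_d -> 'rV[R]_d) (mu : R) (xi : nat -> R)
  (z w : nat -> 'rV[R]_d) (lam : nat -> R) :
  C !=set0 -> closed C -> convex_setH C ->
  VI_dual_sol C F !=set0 ->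
  quasimonotone F ->
  unif_continuousH F ->
  weak_lsc_norm F ->
  (forall x, VI_sol C F x -> ~ VI_dual_sol C F x -> F x != 0) ->
  0 < mu < 1 ->
  (forall n, 0 <= xi n) -> cvgn (series xi) ->
  0 < lam 0%N ->
  alg31 C F mu xi z w lam ->
  (forall n, z n != w n) ->
  exists2 zl, VI_sol C F zl &
    (fun n => enorm (z n - zl)) @ \oo --> (0 : R).
Proof.
move=> _ Ccl Ccv SDne qm uc _ hS hmu xi0 xicv lam0 alg zw.
exact: (alg31_cvg Ccl Ccv SDne qm uc hS hmu xi0 xicv lam0 alg zw).
Qed.
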